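(* Let $X_1,X_2,Y_1,Y_2,Z_1,Z_2$ be random variables with finite state spaces such that $(X_1,Y_1,Z_1)$ is independent of $(X_2,Y_2,Z_2)$. Put $X=(X_1,X_2)$, $Y=(Y_1,Y_2)$, $Z=(Z_1,Z_2)$. Then $\widetilde{SI}(X:Y;Z)=\widetilde{SI}(X_1:Y_1;Z_1)+\widetilde{SI}(X_2:Y_2;Z_2)$, $\widetilde{CI}(X:Y;Z)=\widetilde{CI}(X_1:Y_1;Z_1)+\widetilde{CI}(X_2:Y_2;Z_2)$, $\widetilde{UI}(X:Y\setminus Z)=\widetilde{UI}(X_1:Y_1\setminus Z_1)+\widetilde{UI}(X_2:Y_2\setminus Z_2)$, $\widetilde{UI}(X:Z\setminus Y)=\widetilde{UI}(X_1:Z_1\setminus Y_1)+\widetilde{UI}(X_2:Z_2\setminus Y_2)$.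
   Context: For any triple of random variables $(X,Y,Z)$ with finite state spaces $\mathcal X,\mathcal Y,\mathcal Z$ and joint distribution $P$, let $\Delta$ be the set of all distributions on $\mathcal X\times\mathcal Y\times\mathcal Z$ and $\Delta_P=\{Q\in\Delta: Q(X=x,Y=y)=P(X=x,Y=y)\text{ and }Q(X=x,Z=z)=P(X=x,Z=z)\ \forall x,y,z\}$; a subscript $Q$ means computed w.r.t. $Q$, no subscript means w.r.t. $P$. $CoI_Q(X;Y;Z)=MI_Q(X:Y)-MI_Q(X:Y|Z)$. Define $\widetilde{UI}(X:Y\setminus Z)=\min_{Q\in\Delta_P}MI_Q(X:Y|Z)$, $\widetilde{UI}(X:Z\setminus Y)=\min_{Q\in\Delta_P}MI_Q(X:Z|Y)$, $\widetilde{SI}(X:Y;Z)=\max_{Q\in\Delta_P}CoI_Q(X;Y;Z)$, $\widetilde{CI}(X:Y;Z)=MI(X:(Y,Z))-\min_{Q\in\Delta_P}MI_Q(X:(Y,Z))$. These definitions are applied to each of the triples $(X_1,Y_1,Z_1)$, $(X_2,Y_2,Z_2)$ and $(X,Y,Z)$ with their respective joint distributions. *)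

From Stdlib Require Import Reals ClassicalEpsilon.
From mathcomp Require Import all_boot.
Set Implicit Arguments. Unset Strict Implicit. Unset Printing Implicit Defensive.
Local Open Scope R_scope.

Definition rsum (T : finType) (f : T -> R) : R := \big[Rplus/0]_(t : T) f t.

Definition log2 (x : R) : R := ln x / ln 2.

(* p * log2 (num/den), with the convention 0 * log(...) = 0 *)
Definition plog (p num den : R) : R :=
  if Req_EM_T p 0 then 0 else p * log2 (num / den).

Section Triple.
Variables (X Y Z : finType).

Definition isDist (Q : X -> Y -> Z -> R) : Prop :=
  (forall x y z, 0 <= Q x y z) /\ rsum (fun x => rsum (fun y => rsum (fun z => Q x y z))) = 1.

Definition margXY (Q : X -> Y -> Z -> R) x y := rsum (fun z => Q x y z).
Definition margXZ (Q : X -> Y -> Z -> R) x z := rsum (fun y => Q x y z).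
Definition margYZ (Q : X -> Y -> Z -> R) y z := rsum (fun x => Q x y z).
Definition margX (Q : X -> Y -> Z -> R) x := rsum (fun y => rsum (fun z => Q x y z)).
Definition margY (Q : X -> Y -> Z -> R) y := rsum (fun x => rsum (fun z => Q x y z)).
Definition margZ (Q : X -> Y -> Z -> R) z := rsum (fun x => rsum (fun y => Q x y z)).

Definition MI_XY (Q : X -> Y -> Z -> R) : R :=
  rsum (fun x => rsum (fun y => plog (margXY Q x y) (margXY Q x y) (margX Q x * margY Q y))).
Definition MI_XY_Z (Q : X -> Y -> Z -> R) : R :=
  rsum (fun x => rsum (fun y => rsum (fun z =>
    plog (Q x y z) (Q x y z * margZ Q z) (margXZ Q x z * margYZ Q y z)))).
Definition MI_XZ_Y (Q : X -> Y -> Z -> R) : R :=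
  rsum (fun x => rsum (fun y => rsum (fun z =>
    plog (Q x y z) (Q x y z * margY Q y) (margXY Q x y * margYZ Q y z)))).
Definition MI_X_YZ (Q : X -> Y -> Z -> R) : R :=
  rsum (fun x => rsum (fun y => rsum (fun z =>
    plog (Q x y z) (Q x y z) (margX Q x * margYZ Q y z)))).
Definition CoI (Q : X -> Y -> Z -> R) : R := MI_XY Q - MI_XY_Z Q.

Definition DeltaP (P Q : X -> Y -> Z -> R) : Prop :=
  isDist Q /\ (forall x y, margXY Q x y = margXY P x y)
           /\ (forall x z, margXZ Q x z = margXZ P x z).
End Triple.

Definition IsInf (E : R -> Prop) (m : R) : Prop :=
  (forall r, E r -> m <= r) /\ (forall b, (forall r, E r -> b <= r) -> b <= m).
Definition IsSup (E : R -> Prop) (m : R) : Prop :=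
  (forall r, E r -> r <= m) /\ (forall b, (forall r, E r -> r <= b) -> m <= b).
Definition Rinf (E : R -> Prop) : R := epsilon (inhabits 0) (IsInf E).
Definition Rsup (E : R -> Prop) : R := epsilon (inhabits 0) (IsSup E).

Section PID.
Variables (X Y Z : finType).
Implicit Type P : X -> Y -> Z -> R.
Definition UIY P : R := Rinf (fun r => exists Q, DeltaP P Q /\ r = MI_XY_Z Q).
Definition UIZ P : R := Rinf (fun r => exists Q, DeltaP P Q /\ r = MI_XZ_Y Q).
Definition SI P : R := Rsup (fun r => exists Q, DeltaP P Q /\ r = CoI Q).
Definition CI P : R := MI_X_YZ P - Rinf (fun r => exists Q, DeltaP P Q /\ r = MI_X_YZ Q).
End PID.

(* joint distribution of ((X1,X2),(Y1,Y2),(Z1,Z2)) when (X1,Y1,Z1) is independent of (X2,Y2,Z2) *)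
Definition prodDist (X1 Y1 Z1 X2 Y2 Z2 : finType)
  (P1 : X1 -> Y1 -> Z1 -> R) (P2 : X2 -> Y2 -> Z2 -> R)
  : (X1 * X2)%type -> (Y1 * Y2)%type -> (Z1 * Z2)%type -> R :=
  fun x y z => P1 x.1 y.1 z.1 * P2 x.2 y.2 z.2.

From Stdlib Require Import Reals Lra FunctionalExtensionality PropExtensionality ClassicalEpsilon.
From mathcomp Require Import all_boot.
From HB Require Import structures.
Local Open Scope R_scope.
Set Implicit Arguments. Unset Strict Implicit. Unset Printing Implicit Defensive.

(* For Q in Delta_P, its coordinate laws
   Q1 = [marg1 Q], Q2 = [marg2 Q] lie in Delta_P1, Delta_P2, and the (X,Y)- and
   (X,Z)-marginals of Q factorise.  This yields chain rules
      F(Q) = F(Q1) + F(Q2) + D(Q)   for F = MI(X:Y|Z) and F = MI(X:(Y,Z)),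
   where D ([condDiv]) is the relative entropy of Q w.r.t. Q(y,z) Q1(x1|y1,z1)
   Q2(x2|y2,z2): D >= 0 by Gibbs' inequality and D = 0 on products.  As products of
   elements of Delta_P1 and Delta_P2 lie in Delta_P, the infimum of F over Delta_P is
   the sum of the two infima ([Rinf_F_prod]; they exist since F is bounded below).
   This gives UI(X:Y\Z) and CI; UI(X:Z\Y) follows by exchanging Y and Z, and
   SI = MI(X:Y) - UI(X:Y\Z) since MI_Q(X:Y) is constant on Delta_P and additive. *)

HB.instance Definition _ :=
  Monoid.isComLaw.Build R 0 Rplus (fun a b c => esym (Rplus_assoc a b c)) Rplus_comm Rplus_0_l.

Lemma rsum_ext (T : finType) (f g : T -> R) : (forall t, f t = g t) -> rsum f = rsum g.
Proof. by move=> fg; apply: eq_bigr => t _. Qed.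

Lemma rsum_swap (A B : finType) (f : A -> B -> R) :
  rsum (fun a => rsum (fun b => f a b)) = rsum (fun b => rsum (fun a => f a b)).
Proof. exact: exchange_big. Qed.

Lemma rsum_pair (A B : finType) (f : A * B -> R) :
  rsum f = rsum (fun a => rsum (fun b => f (a, b))).
Proof. by rewrite /rsum pair_bigA; apply: eq_bigr => -[a b]. Qed.

Lemma rsum_add (T : finType) (f g : T -> R) : rsum (fun t => f t + g t) = rsum f + rsum g.
Proof. exact: big_split. Qed.

Lemma rsum_scal (T : finType) c (f : T -> R) : rsum (fun t => c * f t) = c * rsum f.
Proof.
symmetry; apply: (big_morph (Rmult c)) => [x y|]; [exact: Rmult_plus_distr_l | exact: Rmult_0_r].
Qed.

Lemma rsum_scalr (T : finType) c (f : T -> R) : rsum (fun t => f t * c) = rsum f * c.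
Proof. by rewrite Rmult_comm -rsum_scal; apply: rsum_ext => t; ring. Qed.

Lemma rsum_sub (T : finType) (f g : T -> R) : rsum (fun t => f t - g t) = rsum f - rsum g.
Proof.
apply: (Rplus_eq_reg_r (rsum g)); rewrite -rsum_add.
have -> : rsum (fun t => f t - g t + g t) = rsum f by apply: rsum_ext => t; ring.
ring.
Qed.

Lemma rsum_le (T : finType) (f g : T -> R) : (forall t, f t <= g t) -> rsum f <= rsum g.
Proof. by move=> fg; apply: (big_ind2 (fun a b => a <= b)) => *; lra || apply: fg. Qed.

Lemma rsum_ge0 (T : finType) (f : T -> R) : (forall t, 0 <= f t) -> 0 <= rsum f.
Proof. by move=> f0; apply: (big_ind (fun a => 0 <= a)) => *; lra || apply: f0. Qed.

Lemma rsum_ge_term (T : finType) (f : T -> R) t0 : (forall t, 0 <= f t) -> f t0 <= rsum f.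
Proof.
move=> f0; rewrite /rsum (bigD1 t0) //=.
have : 0 <= \big[Rplus/0]_(t | t != t0) f t by apply: big_ind => *; lra || apply: f0.
lra.
Qed.

Lemma rsum_pair_prod (A B : finType) (f : A -> R) (g : B -> R) :
  rsum (fun p : A * B => f p.1 * g p.2) = rsum f * rsum g.
Proof. by rewrite rsum_pair /= -rsum_scalr; apply: rsum_ext => a; rewrite rsum_scal. Qed.

Definition S3 (A B C : finType) (f : A -> B -> C -> R) : R :=
  rsum (fun a => rsum (fun b => rsum (fun c => f a b c))).

Section TripleSums.
Variables A B C : finType.
Implicit Types f g : A -> B -> C -> R.

Lemma S3_ext f g : (forall a b c, f a b c = g a b c) -> S3 f = S3 g.
Proof. by move=> fg; do 3 (apply: rsum_ext => ?). Qed.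

Lemma S3_le f g : (forall a b c, f a b c <= g a b c) -> S3 f <= S3 g.
Proof. by move=> fg; do 3 (apply: rsum_le => ?). Qed.

Lemma S3_add f g : S3 (fun a b c => f a b c + g a b c) = S3 f + S3 g.
Proof. by rewrite /S3 -rsum_add; do 2 (apply: rsum_ext => ?; rewrite -rsum_add). Qed.

Lemma S3_sub f g : S3 (fun a b c => f a b c - g a b c) = S3 f - S3 g.
Proof. by rewrite /S3 -rsum_sub; do 2 (apply: rsum_ext => ?; rewrite -rsum_sub). Qed.

Lemma S3_scal k f : S3 (fun a b c => k * f a b c) = k * S3 f.
Proof. by rewrite /S3 -rsum_scal; do 2 (apply: rsum_ext => ?; rewrite -rsum_scal). Qed.

Lemma S3_scalr k f : S3 (fun a b c => f a b c * k) = S3 f * k.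
Proof. by rewrite Rmult_comm -S3_scal; apply: S3_ext => *; ring. Qed.

Lemma S3_rot f : S3 f = rsum (fun b => rsum (fun c => rsum (fun a => f a b c))).
Proof. by rewrite /S3 rsum_swap; apply: rsum_ext => b; rewrite rsum_swap. Qed.
End TripleSums.

Lemma ln2_pos : 0 < ln 2.
Proof. have := ln_lt_2; lra. Qed.

Lemma ln_le_sub1 x : 0 < x -> ln x <= x - 1.
Proof. by move=> x0; have := exp_ineq1_le (ln x); rewrite exp_ln //; lra. Qed.

Lemma ln_div a b : 0 < a -> 0 < b -> ln (a / b) = ln a - ln b.
Proof.
move=> a0 b0; rewrite /Rdiv ln_mult; last exact: Rinv_0_lt_compat; last by [].
by rewrite ln_Rinv.
Qed.

(* Two facts about quotients that also hold for a zero denominator ([/ 0 = 0]). *)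
Lemma div_ge0 a b : 0 <= a -> 0 <= b -> 0 <= a / b.
Proof.
move=> a0 [b0|<-]; last by rewrite /Rdiv Rinv_0; lra.
by apply: Rmult_le_pos; [|apply: Rlt_le; apply: Rinv_0_lt_compat].
Qed.

Lemma mul_div_le a b : 0 <= a -> 0 <= b -> a * b / b <= a.
Proof.
move=> a0 [b0|<-]; last by rewrite /Rdiv Rinv_0; lra.
by rewrite /Rdiv Rmult_assoc Rinv_r; lra.
Qed.

Lemma plog0 n d : plog 0 n d = 0.
Proof. by rewrite /plog; destruct (Req_EM_T 0 0). Qed.

Lemma plogE p n d : p <> 0 -> plog p n d = p * ln (n / d) / ln 2.
Proof.
move=> p0; rewrite /plog /log2; destruct (Req_EM_T p 0); first by [].
by rewrite /= /Rdiv; ring.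
Qed.

(* A uniform lower bound on a summand, used to show that the infima exist:
   [n >= p^2] and [d <= 1] give [p log(n/d) >= 2 p log p >= -2 / ln 2]. *)
Lemma plog_lb p n d : 0 <= p -> (0 < p -> p * p <= n /\ 0 < d <= 1) ->
  - 2 / ln 2 <= plog p n d.
Proof.
move=> p0 hp; have il2 : 0 < / ln 2 by apply: Rinv_0_lt_compat; exact: ln2_pos.
case: (Req_EM_T p 0) => [->|pn0]; first by rewrite plog0 /Rdiv; nra.
have {}p0 : 0 < p by lra.
have [pp [d0 d1]] := hp p0; rewrite plogE; last lra.
have nd : p * p <= n / d.
  have := Rinv_le_contravar _ _ d0 d1; rewrite Rinv_1 /Rdiv => inv_d.
  have : n <= n * / d by nra.
  lra.
have lnd : ln p + ln p <= ln (n / d).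
  rewrite -ln_mult //; case: (Rle_lt_or_eq_dec _ _ nd) => [lt|eq]; last by rewrite eq; lra.
  by apply: Rlt_le; apply: ln_increasing; [nra|].
have xlnx : p - 1 <= p * ln p.
  have := ln_le_sub1 (Rinv_0_lt_compat _ p0); rewrite ln_Rinv // => h.
  have : p * (- ln p) <= p * (/ p - 1) by apply: Rmult_le_compat_l; lra.
  by rewrite Rmult_minus_distr_l Rinv_r; lra.
rewrite /Rdiv; apply: Rmult_le_compat_r; [lra | nra].
Qed.

Lemma plog_gibbs p n d : 0 <= p -> (0 < p -> 0 < n /\ 0 < d) ->
  (p - p * d / n) / ln 2 <= plog p n d.
Proof.
move=> p0 hp; have l2 := ln2_pos.
case: (Req_EM_T p 0) => [->|pn0].
  by rewrite plog0 /Rdiv !Rmult_0_l Rminus_0_r Rmult_0_l; lra.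
have [n0 d0] : 0 < n /\ 0 < d by apply: hp; lra.
rewrite plogE // /Rdiv; apply: Rmult_le_compat_r; first by apply: Rlt_le; apply: Rinv_0_lt_compat.
have := ln_le_sub1 (Rdiv_lt_0_compat _ _ d0 n0); rewrite !ln_div // => h.
have : p * (1 - d / n) <= p * (ln n - ln d) by apply: Rmult_le_compat_l; lra.
by rewrite /Rdiv; lra.
Qed.

Lemma gibbs_S3 (A B C : finType) (p n d : A -> B -> C -> R) :
  (forall a b c, 0 <= p a b c) ->
  (forall a b c, 0 < p a b c -> 0 < n a b c /\ 0 < d a b c) ->
  S3 (fun a b c => p a b c * d a b c / n a b c) <= S3 p ->
  0 <= S3 (fun a b c => plog (p a b c) (n a b c) (d a b c)).
Proof.
move=> p0 pos mass.
apply: Rle_trans (S3_le (fun a b c => plog_gibbs (p0 a b c) (pos a b c))).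
rewrite /Rdiv S3_scalr S3_sub.
by apply: Rmult_le_pos; [lra | apply: Rlt_le; apply: Rinv_0_lt_compat; exact: ln2_pos].
Qed.

Lemma S3_dist (X Y Z : finType) (Q : X -> Y -> Z -> R) : isDist Q -> S3 Q = 1.
Proof. by case. Qed.

Section Marginals.
Variables (X Y Z : finType) (Q : X -> Y -> Z -> R).
Hypothesis Q0 : forall x y z, 0 <= Q x y z.

Lemma margXY_ge0 x y : 0 <= margXY Q x y. Proof. exact: rsum_ge0. Qed.
Lemma margXZ_ge0 x z : 0 <= margXZ Q x z. Proof. by apply: rsum_ge0 => y. Qed.
Lemma margYZ_ge0 y z : 0 <= margYZ Q y z. Proof. by apply: rsum_ge0 => x. Qed.
Lemma margX_ge0 x : 0 <= margX Q x. Proof. by apply: rsum_ge0 => y; apply: margXY_ge0. Qed.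

Lemma le_margXY x y z : Q x y z <= margXY Q x y.
Proof. exact: (rsum_ge_term z (Q0 x y)). Qed.
Lemma le_margXZ x y z : Q x y z <= margXZ Q x z.
Proof. exact: (rsum_ge_term y (fun y => Q0 x y z)). Qed.
Lemma le_margYZ x y z : Q x y z <= margYZ Q y z.
Proof. exact: (rsum_ge_term x (fun x => Q0 x y z)). Qed.
Lemma le_margX x y z : Q x y z <= margX Q x.
Proof.
apply: Rle_trans (le_margXY x y z) _.
exact: (rsum_ge_term y (margXY_ge0 x)).
Qed.
Lemma le_margZ x y z : Q x y z <= margZ Q z.
Proof.
apply: Rle_trans (le_margXZ x y z) _.
exact: (rsum_ge_term x (margXZ_ge0^~ z)).
Qed.

Lemma margX_le_S3 x : margX Q x <= S3 Q.
Proof. exact: (rsum_ge_term x margX_ge0). Qed.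
Lemma margXZ_le_S3 x z : margXZ Q x z <= S3 Q.
Proof.
apply: Rle_trans (margX_le_S3 x); apply: rsum_le => y.
exact: (rsum_ge_term z (Q0 x y)).
Qed.
Lemma margYZ_le_S3 y z : margYZ Q y z <= S3 Q.
Proof. by apply: rsum_le => x; apply: le_margX. Qed.
Lemma le_S3 x y z : Q x y z <= S3 Q.
Proof. exact: Rle_trans (le_margX x y z) (margX_le_S3 x). Qed.

Lemma margs_pos x y z : 0 < Q x y z ->
  [/\ 0 < margX Q x, 0 < margZ Q z, 0 < margXZ Q x z & 0 < margYZ Q y z].
Proof.
move=> q0; have := le_margX x y z; have := le_margZ x y z.
by have := le_margXZ x y z; have := le_margYZ x y z; split; lra.
Qed.
End Marginals.

(* The conditional mutual information is bounded below on distributions: in each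
   summand n = Q(x,y,z) Q(z) >= Q(x,y,z)^2 and d = Q(x,z) Q(y,z) lies in (0,1]. *)
Lemma MI_XY_Z_bounded (X Y Z : finType) :
  exists b, forall Q : X -> Y -> Z -> R, isDist Q -> b <= MI_XY_Z Q.
Proof.
exists (S3 (fun (_ : X) (_ : Y) (_ : Z) => - 2 / ln 2)) => Q [Q0 Q1].
apply: S3_le => x y z; apply: plog_lb; first exact: Q0.
have := margXZ_le_S3 Q0 x z; have := margYZ_le_S3 Q0 y z; rewrite /S3 Q1.
have := le_margZ Q0 x y z; have := le_margXZ Q0 x y z; have := le_margYZ Q0 x y z.
move=> *; split; first nra.
split; first nra.
by rewrite -(Rmult_1_l 1); apply: Rmult_le_compat; nra.
Qed.

(* Likewise for MI_Q(X:(Y,Z)), where n = Q(x,y,z) >= Q(x,y,z)^2 since Q <= 1. *)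
Lemma MI_X_YZ_bounded (X Y Z : finType) :
  exists b, forall Q : X -> Y -> Z -> R, isDist Q -> b <= MI_X_YZ Q.
Proof.
exists (S3 (fun (_ : X) (_ : Y) (_ : Z) => - 2 / ln 2)) => Q [Q0 Q1].
apply: S3_le => x y z; apply: plog_lb; first exact: Q0.
have := margX_le_S3 Q0 x; have := margYZ_le_S3 Q0 y z; have := le_S3 Q0 x y z.
rewrite /S3 Q1; have := le_margX Q0 x y z; have := le_margYZ Q0 x y z.
move=> *; split; first nra.
split; first nra.
by rewrite -(Rmult_1_l 1); apply: Rmult_le_compat; nra.
Qed.

Lemma S3_comm (A1 B1 C1 A2 B2 C2 : finType) (g : A1 -> B1 -> C1 -> A2 -> B2 -> C2 -> R) :
  S3 (fun a1 b1 c1 => S3 (fun a2 b2 c2 => g a1 b1 c1 a2 b2 c2)) =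
  S3 (fun a2 b2 c2 => S3 (fun a1 b1 c1 => g a1 b1 c1 a2 b2 c2)).
Proof.
have pull (A B C T : finType) (h : A -> B -> C -> T -> R) :
    S3 (fun a b c => rsum (h a b c)) = rsum (fun t => S3 (fun a b c => h a b c t)).
  rewrite /S3; under rsum_ext => a do under rsum_ext => b do rewrite rsum_swap.
  by under rsum_ext => a do rewrite rsum_swap; rewrite rsum_swap.
rewrite [LHS]pull; apply: rsum_ext => a2; rewrite [LHS]pull; apply: rsum_ext => b2.
by rewrite [LHS]pull.
Qed.

Section Coordinates.
Variables (X1 Y1 Z1 X2 Y2 Z2 : finType).
Local Notation X := (X1 * X2)%type.
Local Notation Y := (Y1 * Y2)%type.
Local Notation Z := (Z1 * Z2)%type.
Implicit Types (Q : X -> Y -> Z -> R).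

Lemma S3_split (f : X -> Y -> Z -> R) :
  S3 f = S3 (fun x1 y1 z1 => S3 (fun x2 y2 z2 => f (x1, x2) (y1, y2) (z1, z2))).
Proof.
rewrite /S3 rsum_pair; apply: rsum_ext => x1.
under rsum_ext => x2 do (rewrite rsum_pair; under rsum_ext => y1 do
   under rsum_ext => y2 do rewrite rsum_pair).
rewrite rsum_swap; apply: rsum_ext => y1.
by under rsum_ext => x2 do rewrite rsum_swap; rewrite rsum_swap.
Qed.

Definition marg1 Q x1 y1 z1 : R := S3 (fun x2 y2 z2 => Q (x1, x2) (y1, y2) (z1, z2)).
Definition marg2 Q x2 y2 z2 : R := S3 (fun x1 y1 z1 => Q (x1, x2) (y1, y2) (z1, z2)).

Lemma S3_marg1 Q : S3 (marg1 Q) = S3 Q.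
Proof. by rewrite [RHS]S3_split. Qed.

Lemma S3_marg2 Q : S3 (marg2 Q) = S3 Q.
Proof. by rewrite [RHS]S3_split S3_comm. Qed.

Lemma marg1_margXY Q x1 y1 :
  margXY (marg1 Q) x1 y1 = rsum (fun x2 => rsum (fun y2 => margXY Q (x1, x2) (y1, y2))).
Proof.
rewrite /margXY /marg1 /S3 rsum_swap; apply: rsum_ext => x2.
by rewrite rsum_swap; apply: rsum_ext => y2; rewrite rsum_pair.
Qed.

Lemma marg1_margXZ Q x1 z1 :
  margXZ (marg1 Q) x1 z1 = rsum (fun x2 => rsum (fun z2 => margXZ Q (x1, x2) (z1, z2))).
Proof.
rewrite /margXZ /marg1 /S3 rsum_swap; apply: rsum_ext => x2.
under [RHS]rsum_ext => z2 do rewrite rsum_pair.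
by under rsum_ext => y1 do rewrite rsum_swap; rewrite rsum_swap.
Qed.

Lemma marg2_margXY Q x2 y2 :
  margXY (marg2 Q) x2 y2 = rsum (fun x1 => rsum (fun y1 => margXY Q (x1, x2) (y1, y2))).
Proof.
rewrite /margXY /marg2 /S3 rsum_swap; apply: rsum_ext => x1.
by rewrite rsum_swap; apply: rsum_ext => y1; rewrite rsum_pair rsum_swap.
Qed.

Lemma marg2_margXZ Q x2 z2 :
  margXZ (marg2 Q) x2 z2 = rsum (fun x1 => rsum (fun z1 => margXZ Q (x1, x2) (z1, z2))).
Proof.
rewrite /margXZ /marg2 /S3 rsum_swap; apply: rsum_ext => x1.
under [RHS]rsum_ext => z1 do rewrite rsum_pair.
rewrite [LHS]rsum_swap; under rsum_ext => y1 do rewrite rsum_swap.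
by rewrite [LHS]rsum_swap.
Qed.

Section Nonneg.
Variables (Q : X -> Y -> Z -> R) (Q0 : forall x y z, 0 <= Q x y z).

Lemma marg1_ge0 x1 y1 z1 : 0 <= marg1 Q x1 y1 z1.
Proof. by do 3 (apply: rsum_ge0 => ?). Qed.
Lemma marg2_ge0 x2 y2 z2 : 0 <= marg2 Q x2 y2 z2.
Proof. by do 3 (apply: rsum_ge0 => ?). Qed.

Lemma le_marg1 x y z : Q x y z <= marg1 Q x.1 y.1 z.1.
Proof. by case: x y z => [x1 x2] [y1 y2] [z1 z2]; apply: (le_S3 (fun a b c => Q0 _ _ _)). Qed.
Lemma le_marg2 x y z : Q x y z <= marg2 Q x.2 y.2 z.2.
Proof. by case: x y z => [x1 x2] [y1 y2] [z1 z2]; apply: (le_S3 (fun a b c => Q0 _ _ _)). Qed.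
End Nonneg.

Lemma prod_margXY (Q1 : X1 -> Y1 -> Z1 -> R) (Q2 : X2 -> Y2 -> Z2 -> R) x y :
  margXY (prodDist Q1 Q2) x y = margXY Q1 x.1 y.1 * margXY Q2 x.2 y.2.
Proof. exact: (rsum_pair_prod (fun z1 => Q1 x.1 y.1 z1) (fun z2 => Q2 x.2 y.2 z2)). Qed.
Lemma prod_margXZ (Q1 : X1 -> Y1 -> Z1 -> R) (Q2 : X2 -> Y2 -> Z2 -> R) x z :
  margXZ (prodDist Q1 Q2) x z = margXZ Q1 x.1 z.1 * margXZ Q2 x.2 z.2.
Proof. exact: (rsum_pair_prod (fun y1 => Q1 x.1 y1 z.1) (fun y2 => Q2 x.2 y2 z.2)). Qed.
Lemma prod_margYZ (Q1 : X1 -> Y1 -> Z1 -> R) (Q2 : X2 -> Y2 -> Z2 -> R) y z :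
  margYZ (prodDist Q1 Q2) y z = margYZ Q1 y.1 z.1 * margYZ Q2 y.2 z.2.
Proof. exact: (rsum_pair_prod (fun x1 => Q1 x1 y.1 z.1) (fun x2 => Q2 x2 y.2 z.2)). Qed.

Lemma S3_prod (Q1 : X1 -> Y1 -> Z1 -> R) (Q2 : X2 -> Y2 -> Z2 -> R) :
  S3 (prodDist Q1 Q2) = S3 Q1 * S3 Q2.
Proof.
rewrite S3_split /prodDist /=.
by under S3_ext => x1 y1 z1 do rewrite S3_scal; rewrite S3_scalr.
Qed.

Lemma isDist_prod (Q1 : X1 -> Y1 -> Z1 -> R) (Q2 : X2 -> Y2 -> Z2 -> R) :
  isDist Q1 -> isDist Q2 -> isDist (prodDist Q1 Q2).
Proof.
move=> [Q10 Q11] [Q20 Q21]; split.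
  by move=> x y z; apply: Rmult_le_pos; [apply: Q10 | apply: Q20].
by have := S3_prod Q1 Q2; rewrite /S3 Q11 Q21 Rmult_1_l.
Qed.

Lemma marg1_prod (Q1 : X1 -> Y1 -> Z1 -> R) (Q2 : X2 -> Y2 -> Z2 -> R) :
  S3 Q2 = 1 -> marg1 (prodDist Q1 Q2) = Q1.
Proof.
move=> Q21; do 3 (apply: functional_extensionality => ?).
by rewrite /marg1 /prodDist /= S3_scal Q21 Rmult_1_r.
Qed.

Lemma marg2_prod (Q1 : X1 -> Y1 -> Z1 -> R) (Q2 : X2 -> Y2 -> Z2 -> R) :
  S3 Q1 = 1 -> marg2 (prodDist Q1 Q2) = Q2.
Proof.
move=> Q11; do 3 (apply: functional_extensionality => ?).
by rewrite /marg2 /prodDist /= S3_scalr Q11 Rmult_1_l.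
Qed.
End Coordinates.

Definition logq (p n d : R) : R := if Req_EM_T p 0 then 0 else ln (n / d) / ln 2.

Lemma plog_logq p n d : plog p n d = p * logq p n d.
Proof.
rewrite /plog /logq /log2; destruct (Req_EM_T p 0) as [e|ne]; rewrite /=; [rewrite e|]; ring.
Qed.

Lemma ln_frac2 a b c d : 0 < a -> 0 < b -> 0 < c -> 0 < d ->
  ln (a * b / (c * d)) = ln a + ln b - ln c - ln d.
Proof.
move=> *; rewrite ln_div; try exact: Rmult_lt_0_compat.
by rewrite !ln_mult //; ring.
Qed.

Section Decomposition.
Variables (X1 Y1 Z1 X2 Y2 Z2 : finType).
Local Notation X := (X1 * X2)%type.
Local Notation Y := (Y1 * Y2)%type.
Local Notation Z := (Z1 * Z2)%type.
Implicit Types (Q : X -> Y -> Z -> R).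

Lemma S3_plog_split Q (Q0 : forall x y z, 0 <= Q x y z)
  (n d nD dD : X -> Y -> Z -> R) (n1 d1 : X1 -> Y1 -> Z1 -> R) (n2 d2 : X2 -> Y2 -> Z2 -> R) :
  (forall x y z, 0 < Q x y z ->
     ln (n x y z / d x y z) = ln (n1 x.1 y.1 z.1 / d1 x.1 y.1 z.1)
       + ln (n2 x.2 y.2 z.2 / d2 x.2 y.2 z.2) + ln (nD x y z / dD x y z)) ->
  S3 (fun x y z => plog (Q x y z) (n x y z) (d x y z)) =
  S3 (fun x1 y1 z1 => plog (marg1 Q x1 y1 z1) (n1 x1 y1 z1) (d1 x1 y1 z1)) +
  S3 (fun x2 y2 z2 => plog (marg2 Q x2 y2 z2) (n2 x2 y2 z2) (d2 x2 y2 z2)) +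
  S3 (fun x y z => plog (Q x y z) (nD x y z) (dD x y z)).
Proof.
move=> split_ln.
have -> : S3 (fun x1 y1 z1 => plog (marg1 Q x1 y1 z1) (n1 x1 y1 z1) (d1 x1 y1 z1)) =
    S3 (fun x y z => Q x y z * logq (marg1 Q x.1 y.1 z.1) (n1 x.1 y.1 z.1) (d1 x.1 y.1 z.1)).
  rewrite [RHS]S3_split /=; apply: S3_ext => x1 y1 z1.
  by rewrite plog_logq S3_scalr.
have -> : S3 (fun x2 y2 z2 => plog (marg2 Q x2 y2 z2) (n2 x2 y2 z2) (d2 x2 y2 z2)) =
    S3 (fun x y z => Q x y z * logq (marg2 Q x.2 y.2 z.2) (n2 x.2 y.2 z.2) (d2 x.2 y.2 z.2)).
  rewrite [RHS]S3_split /= S3_comm; apply: S3_ext => x2 y2 z2.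
  by rewrite plog_logq S3_scalr.
rewrite -!S3_add; apply: S3_ext => x y z.
destruct (Req_EM_T (Q x y z) 0) as [->|qn0]; first by rewrite !plog0; ring.
have q0 : 0 < Q x y z by have := Q0 x y z; lra.
have := le_marg1 Q0 x y z; have := le_marg2 Q0 x y z.
rewrite !plogE // /logq => q2 q1.
destruct (Req_EM_T (marg1 Q x.1 y.1 z.1) 0); first lra.
destruct (Req_EM_T (marg2 Q x.2 y.2 z.2) 0); first lra.
by rewrite /= (split_ln _ _ _ q0) /Rdiv; ring.
Qed.

(* Relative entropy of Q with respect to the law under which (Y,Z) is distributed as
   under Q and X1, X2 are drawn independently given (Y,Z) from the conditional laws
   Q1(x1 | y1,z1) and Q2(x2 | y2,z2) of the coordinate laws Q1, Q2 of Q. *)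
Definition condDiv Q : R :=
  S3 (fun x y z => plog (Q x y z)
        (Q x y z * margYZ (marg1 Q) y.1 z.1 * margYZ (marg2 Q) y.2 z.2)
        (margYZ Q y z * marg1 Q x.1 y.1 z.1 * marg2 Q x.2 y.2 z.2)).

(* Gibbs: the reference law above has total mass at most one. *)
Lemma condDiv_ge0 Q : (forall x y z, 0 <= Q x y z) -> S3 Q = 1 -> 0 <= condDiv Q.
Proof.
move=> Q0 Q1.
have M10 := marg1_ge0 Q0; have M20 := marg2_ge0 Q0.
pose c x y z := margYZ Q y z * marg1 Q x.1 y.1 z.1 * marg2 Q x.2 y.2 z.2 /
   (margYZ (marg1 Q) y.1 z.1 * margYZ (marg2 Q) y.2 z.2).
have mYZ12_ge0 y z : 0 <= margYZ (marg1 Q) y.1 z.1 * margYZ (marg2 Q) y.2 z.2.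
  by apply: Rmult_le_pos; apply: margYZ_ge0.
apply: gibbs_S3 => [//|x y z q0|].
  have := le_marg1 Q0 x y z; have := le_marg2 Q0 x y z; have := le_margYZ Q0 x y z.
  have := le_margYZ M10 x.1 y.1 z.1; have := le_margYZ M20 x.2 y.2 z.2.
  by move=> *; split; repeat apply: Rmult_lt_0_compat; lra.
apply: (@Rle_trans _ (S3 c)).
  apply: S3_le => x y z; case: (Req_EM_T (Q x y z) 0) => [->|qn0].
    rewrite /Rdiv !Rmult_0_l; apply: div_ge0 => //.
    by repeat apply: Rmult_le_pos; [apply: margYZ_ge0 | apply: M10 | apply: M20].
  have q0 : 0 < Q x y z by have := Q0 x y z; lra.
  have := le_margYZ M10 x.1 y.1 z.1; have := le_margYZ M20 x.2 y.2 z.2.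
  have := le_marg1 Q0 x y z; have := le_marg2 Q0 x y z => *.
  by rewrite /c; right; field; repeat split; lra.
rewrite S3_rot [S3 Q]S3_rot; apply: rsum_le => y; apply: rsum_le => z.
have -> : rsum (fun x => c x y z) = margYZ Q y z /
    (margYZ (marg1 Q) y.1 z.1 * margYZ (marg2 Q) y.2 z.2) *
    rsum (fun x : X => marg1 Q x.1 y.1 z.1 * marg2 Q x.2 y.2 z.2).
  by rewrite -rsum_scal; apply: rsum_ext => x; rewrite /c /Rdiv; ring.
rewrite (rsum_pair_prod (fun x1 => marg1 Q x1 y.1 z.1) (fun x2 => marg2 Q x2 y.2 z.2)).
rewrite -/(margYZ (marg1 Q) y.1 z.1) -/(margYZ (marg2 Q) y.2 z.2).
apply: Rle_trans (mul_div_le (margYZ_ge0 Q0 y z) (mYZ12_ge0 y z)).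
by right; rewrite /Rdiv; ring.
Qed.

(* For a product of distributions the reference law is the product itself. *)
Lemma condDiv_prod (Q1 : X1 -> Y1 -> Z1 -> R) (Q2 : X2 -> Y2 -> Z2 -> R) :
  isDist Q1 -> isDist Q2 -> condDiv (prodDist Q1 Q2) = 0.
Proof.
move=> [Q10 Q11] [Q20 Q21]; rewrite /condDiv marg1_prod // marg2_prod //.
rewrite -(Rmult_0_l (S3 (fun (_ : X) (_ : Y) (_ : Z) => 0))) -S3_scal.
apply: S3_ext => x y z; rewrite prod_margYZ /prodDist.
have := Q10 x.1 y.1 z.1; have := Q20 x.2 y.2 z.2 => q2 q1.
case: (Req_EM_T (Q1 x.1 y.1 z.1 * Q2 x.2 y.2 z.2) 0) => [->|qn0]; first by rewrite plog0; ring.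
have := le_margYZ Q10 x.1 y.1 z.1; have := le_margYZ Q20 x.2 y.2 z.2 => *.
have [q1p q2p] : 0 < Q1 x.1 y.1 z.1 /\ 0 < Q2 x.2 y.2 z.2.
  by split; apply: Rnot_le_lt => ?; apply: qn0; nra.
rewrite plogE // -[X in ln X](_ : 1 = _) ?ln_1 /Rdiv; first ring.
by field; repeat split; lra.
Qed.

(* The constraints of Delta_P force the pairwise marginals of Q to factorise. *)
Definition factorsXY Q : Prop := forall x y,
  margXY Q x y = margXY (marg1 Q) x.1 y.1 * margXY (marg2 Q) x.2 y.2.
Definition factorsXZ Q : Prop := forall x z,
  margXZ Q x z = margXZ (marg1 Q) x.1 z.1 * margXZ (marg2 Q) x.2 z.2.

Lemma factorsX Q : factorsXY Q -> forall x,
  margX Q x = margX (marg1 Q) x.1 * margX (marg2 Q) x.2.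
Proof.
move=> fXY x; change (rsum (fun y => margXY Q x y) = margX (marg1 Q) x.1 * margX (marg2 Q) x.2).
under rsum_ext => y do rewrite fXY.
exact: (rsum_pair_prod (fun y1 => margXY (marg1 Q) x.1 y1) (fun y2 => margXY (marg2 Q) x.2 y2)).
Qed.

Lemma factorsZ Q : factorsXZ Q -> forall z,
  margZ Q z = margZ (marg1 Q) z.1 * margZ (marg2 Q) z.2.
Proof.
move=> fXZ z; change (rsum (fun x => margXZ Q x z) = margZ (marg1 Q) z.1 * margZ (marg2 Q) z.2).
under rsum_ext => x do rewrite fXZ.
exact: (rsum_pair_prod (fun x1 => margXZ (marg1 Q) x1 z.1) (fun x2 => margXZ (marg2 Q) x2 z.2)).
Qed.

Lemma MI_XY_Z_split Q : (forall x y z, 0 <= Q x y z) -> factorsXZ Q ->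
  MI_XY_Z Q = MI_XY_Z (marg1 Q) + MI_XY_Z (marg2 Q) + condDiv Q.
Proof.
move=> Q0 fXZ.
apply: (S3_plog_split Q0 (n1 := fun x y z => marg1 Q x y z * margZ (marg1 Q) z)
  (d1 := fun x y z => margXZ (marg1 Q) x z * margYZ (marg1 Q) y z)
  (n2 := fun x y z => marg2 Q x y z * margZ (marg2 Q) z)
  (d2 := fun x y z => margXZ (marg2 Q) x z * margYZ (marg2 Q) y z)) => x y z q0 /=.
have q1 : 0 < marg1 Q x.1 y.1 z.1 by have := le_marg1 Q0 x y z; lra.
have q2 : 0 < marg2 Q x.2 y.2 z.2 by have := le_marg2 Q0 x y z; lra.
have [_ pZ pXZ pYZ] := margs_pos Q0 q0.
have [_ p1Z p1XZ p1YZ] := margs_pos (marg1_ge0 Q0) q1.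
have [_ p2Z p2XZ p2YZ] := margs_pos (marg2_ge0 Q0) q2.
have lnZ : ln (margZ Q z) = ln (margZ (marg1 Q) z.1) + ln (margZ (marg2 Q) z.2).
  by rewrite factorsZ // ln_mult.
have lnXZ : ln (margXZ Q x z) = ln (margXZ (marg1 Q) x.1 z.1) + ln (margXZ (marg2 Q) x.2 z.2).
  by rewrite fXZ ln_mult.
rewrite !ln_frac2 //; try by apply: Rmult_lt_0_compat.
by rewrite (ln_mult (Q x y z)) // (ln_mult (margYZ Q y z)) //; lra.
Qed.

Lemma MI_X_YZ_split Q : (forall x y z, 0 <= Q x y z) -> factorsXY Q ->
  MI_X_YZ Q = MI_X_YZ (marg1 Q) + MI_X_YZ (marg2 Q) + condDiv Q.
Proof.
move=> Q0 fXY.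
apply: (S3_plog_split Q0 (n1 := marg1 Q)
  (d1 := fun x y z => margX (marg1 Q) x * margYZ (marg1 Q) y z) (n2 := marg2 Q)
  (d2 := fun x y z => margX (marg2 Q) x * margYZ (marg2 Q) y z)) => x y z q0 /=.
have q1 : 0 < marg1 Q x.1 y.1 z.1 by have := le_marg1 Q0 x y z; lra.
have q2 : 0 < marg2 Q x.2 y.2 z.2 by have := le_marg2 Q0 x y z; lra.
have [pX _ _ pYZ] := margs_pos Q0 q0.
have [p1X _ _ p1YZ] := margs_pos (marg1_ge0 Q0) q1.
have [p2X _ _ p2YZ] := margs_pos (marg2_ge0 Q0) q2.
have lnX : ln (margX Q x) = ln (margX (marg1 Q) x.1) + ln (margX (marg2 Q) x.2).
  by rewrite factorsX // ln_mult.
rewrite !ln_div; try by repeat apply: Rmult_lt_0_compat.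
by rewrite !ln_mult //; try (by repeat apply: Rmult_lt_0_compat); lra.
Qed.
End Decomposition.

Lemma rsum_margXZ (A B C : finType) (Q : A -> B -> C -> R) :
  rsum (fun a => rsum (fun c => margXZ Q a c)) = S3 Q.
Proof. by apply: rsum_ext => a; rewrite rsum_swap. Qed.

Section DeltaProduct.
Variables (X1 Y1 Z1 X2 Y2 Z2 : finType).
Variables (P1 : X1 -> Y1 -> Z1 -> R) (P2 : X2 -> Y2 -> Z2 -> R).
Hypotheses (P1d : isDist P1) (P2d : isDist P2).
Local Notation P := (prodDist P1 P2).

Lemma DeltaP_marg1 Q : DeltaP P Q -> DeltaP P1 (marg1 Q).
Proof.
move=> [[Q0 Q1] [QXY QXZ]]; split; [split|split].
- exact: marg1_ge0.
- exact: eq_trans (S3_marg1 Q) Q1.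
- move=> x1 y1; rewrite marg1_margXY.
  under rsum_ext => x2 do under rsum_ext => y2 do rewrite QXY prod_margXY /=.
  under rsum_ext => x2 do rewrite rsum_scal.
  by rewrite rsum_scal -/(S3 P2) (S3_dist P2d) Rmult_1_r.
- move=> x1 z1; rewrite marg1_margXZ.
  under rsum_ext => x2 do under rsum_ext => z2 do rewrite QXZ prod_margXZ /=.
  under rsum_ext => x2 do rewrite rsum_scal.
  by rewrite rsum_scal rsum_margXZ (S3_dist P2d) Rmult_1_r.
Qed.

Lemma DeltaP_marg2 Q : DeltaP P Q -> DeltaP P2 (marg2 Q).
Proof.
move=> [[Q0 Q1] [QXY QXZ]]; split; [split|split].
- exact: marg2_ge0.
- exact: eq_trans (S3_marg2 Q) Q1.
- move=> x2 y2; rewrite marg2_margXY.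
  under rsum_ext => x1 do under rsum_ext => y1 do rewrite QXY prod_margXY /=.
  under rsum_ext => x1 do rewrite rsum_scalr.
  by rewrite rsum_scalr -/(S3 P1) (S3_dist P1d) Rmult_1_l.
- move=> x2 z2; rewrite marg2_margXZ.
  under rsum_ext => x1 do under rsum_ext => z1 do rewrite QXZ prod_margXZ /=.
  under rsum_ext => x1 do rewrite rsum_scalr.
  by rewrite rsum_scalr rsum_margXZ (S3_dist P1d) Rmult_1_l.
Qed.

Lemma DeltaP_factors Q : DeltaP P Q -> factorsXY Q /\ factorsXZ Q.
Proof.
move=> DQ; have [_ [XY1 XZ1]] := DeltaP_marg1 DQ; have [_ [XY2 XZ2]] := DeltaP_marg2 DQ.
case: DQ => _ [QXY QXZ]; split => [x y | x z].
- by rewrite QXY prod_margXY XY1 XY2.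
- by rewrite QXZ prod_margXZ XZ1 XZ2.
Qed.

Lemma DeltaP_prod Q1 Q2 : DeltaP P1 Q1 -> DeltaP P2 Q2 -> DeltaP P (prodDist Q1 Q2).
Proof.
move=> [Q1d [XY1 XZ1]] [Q2d [XY2 XZ2]]; split; first exact: isDist_prod.
by split=> [x y | x z]; rewrite ?prod_margXY ?prod_margXZ ?XY1 ?XY2 ?XZ1 ?XZ2.
Qed.
End DeltaProduct.

Lemma factors_prod (X1 Y1 Z1 X2 Y2 Z2 : finType)
  (Q1 : X1 -> Y1 -> Z1 -> R) (Q2 : X2 -> Y2 -> Z2 -> R) : isDist Q1 -> isDist Q2 ->
  factorsXY (prodDist Q1 Q2) /\ factorsXZ (prodDist Q1 Q2).
Proof.
move=> [_ Q11] [_ Q21]; rewrite /factorsXY /factorsXZ marg1_prod // marg2_prod //.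
by split; [apply: prod_margXY | apply: prod_margXZ].
Qed.

Lemma Rinf_eq E m : IsInf E m -> Rinf E = m.
Proof.
move=> [m_lb m_glb]; rewrite /Rinf.
have [e_lb e_glb] := epsilon_spec (inhabits 0) (IsInf E) (ex_intro _ m (conj m_lb m_glb)).
by apply: Rle_antisym; [apply: m_glb | apply: e_glb].
Qed.

Lemma Rsup_eq E m : IsSup E m -> Rsup E = m.
Proof.
move=> [m_ub m_lub]; rewrite /Rsup.
have [e_ub e_lub] := epsilon_spec (inhabits 0) (IsSup E) (ex_intro _ m (conj m_ub m_lub)).
by apply: Rle_antisym; [apply: e_lub | apply: m_lub].
Qed.

Lemma inf_exists (E : R -> Prop) : (exists r, E r) -> (exists b, forall r, E r -> b <= r) ->
  exists m, IsInf E m.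
Proof.
move=> [r0 Er0] [b b_lb].
have bnd : bound (fun r => E (- r)) by exists (- b) => r /b_lb; lra.
have ne : exists r, E (- r) by exists (- r0); rewrite Ropp_involutive.
have [m [m_ub m_lub]] := completeness _ bnd ne.
exists (- m); split => [r Er | c c_lb].
- have : - r <= m by apply: m_ub; rewrite Ropp_involutive.
  lra.
- have : m <= - c by apply: m_lub => r /c_lb; lra.
  lra.
Qed.

Lemma inf_add (E E1 E2 : R -> Prop) :
  (exists r, E1 r) -> (exists r, E2 r) ->
  (exists b, forall r, E1 r -> b <= r) -> (exists b, forall r, E2 r -> b <= r) ->
  (forall r, E r -> exists r1 r2, E1 r1 /\ E2 r2 /\ r1 + r2 <= r) ->
  (forall r1 r2, E1 r1 -> E2 r2 -> E (r1 + r2)) ->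
  IsInf E (Rinf E1 + Rinf E2).
Proof.
move=> ne1 ne2 lb1 lb2 above sums.
have [m1 inf1] := inf_exists ne1 lb1; have [m2 inf2] := inf_exists ne2 lb2.
rewrite (Rinf_eq inf1) (Rinf_eq inf2).
case: inf1 => m1_lb m1_glb; case: inf2 => m2_lb m2_glb.
split => [r /above [r1 [r2 [E1r1 [E2r2 le_r]]]] | b b_lb].
  by have := m1_lb _ E1r1; have := m2_lb _ E2r2; lra.
suff : b - m2 <= m1 by lra.
apply: m1_glb => r1 E1r1.
suff : b - r1 <= m2 by lra.
by apply: m2_glb => r2 E2r2; have := b_lb _ (sums _ _ E1r1 E2r2); lra.
Qed.

Definition valuesOn (F : forall A B C : finType, (A -> B -> C -> R) -> R)
  (A B C : finType) (P : A -> B -> C -> R) : R -> Prop :=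
  fun r => exists Q, DeltaP P Q /\ r = F A B C Q.

Lemma valuesOn_ne F (A B C : finType) (P : A -> B -> C -> R) :
  isDist P -> exists r, valuesOn F P r.
Proof. by move=> Pd; exists (F A B C P), P. Qed.

Section Additivity.
Variable F : forall A B C : finType, (A -> B -> C -> R) -> R.
Hypothesis F_bounded : forall A B C : finType,
  exists b, forall Q : A -> B -> C -> R, isDist Q -> b <= F Q.
Hypothesis F_split : forall (X1 Y1 Z1 X2 Y2 Z2 : finType)
  (Q : (X1 * X2)%type -> (Y1 * Y2)%type -> (Z1 * Z2)%type -> R),
  (forall x y z, 0 <= Q x y z) -> factorsXY Q -> factorsXZ Q ->
  F Q = F (marg1 Q) + F (marg2 Q) + condDiv Q.

Variables (X1 Y1 Z1 X2 Y2 Z2 : finType).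
Variables (P1 : X1 -> Y1 -> Z1 -> R) (P2 : X2 -> Y2 -> Z2 -> R).
Hypotheses (P1d : isDist P1) (P2d : isDist P2).

Lemma F_prod (Q1 : X1 -> Y1 -> Z1 -> R) (Q2 : X2 -> Y2 -> Z2 -> R) :
  isDist Q1 -> isDist Q2 -> F (prodDist Q1 Q2) = F Q1 + F Q2.
Proof.
move=> Q1d Q2d; have [fXY fXZ] := factors_prod Q1d Q2d.
rewrite F_split //; last by case: (isDist_prod Q1d Q2d).
rewrite marg1_prod ?marg2_prod ?condDiv_prod //; [ring | exact: S3_dist..].
Qed.

Lemma Rinf_F_prod : IsInf (valuesOn F (prodDist P1 P2))
                      (Rinf (valuesOn F P1) + Rinf (valuesOn F P2)).
Proof.
have bounded (A B C : finType) (P : A -> B -> C -> R) :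
    exists b, forall r, valuesOn F P r -> b <= r.
  by have [b Fb] := F_bounded A B C; exists b => r [Q [[Qd _] ->]]; apply: Fb.
apply: inf_add; try exact: valuesOn_ne; try exact: bounded.
- move=> r [Q [DQ ->]]; have [fXY fXZ] := DeltaP_factors P1d P2d DQ.
  have [[Q0 Q1] _] := DQ.
  have D1 := DeltaP_marg1 P2d DQ; have D2 := DeltaP_marg2 P1d DQ.
  exists (F (marg1 Q)), (F (marg2 Q)).
  split; first by exists (marg1 Q).
  split; first by exists (marg2 Q).
  by rewrite F_split //; have := condDiv_ge0 Q0 Q1; lra.
- move=> r1 r2 [Q1 [DQ1 ->]] [Q2 [DQ2 ->]].
  exists (prodDist Q1 Q2); split; first exact: DeltaP_prod.
  by rewrite F_prod //; [case: DQ1 | case: DQ2].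
Qed.
End Additivity.

Lemma Rinf_spec (E : R -> Prop) : (exists r, E r) -> (exists b, forall r, E r -> b <= r) ->
  IsInf E (Rinf E).
Proof. by move=> ne lb; have [m infm] := inf_exists ne lb; rewrite (Rinf_eq infm). Qed.

Lemma UIY_prod (X1 Y1 Z1 X2 Y2 Z2 : finType)
  (P1 : X1 -> Y1 -> Z1 -> R) (P2 : X2 -> Y2 -> Z2 -> R) :
  isDist P1 -> isDist P2 -> UIY (prodDist P1 P2) = UIY P1 + UIY P2.
Proof.
move=> P1d P2d; apply: Rinf_eq; apply: (Rinf_F_prod (F := @MI_XY_Z)) => //.
  exact: MI_XY_Z_bounded.
by move=> ? ? ? ? ? ? Q Q0 _; apply: MI_XY_Z_split.
Qed.

(* Exchanging the roles of Y and Z turns UI(X:Z\Y) into UI(X:Y\Z). *)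
Definition swapYZ (A B C : finType) (Q : A -> B -> C -> R) : A -> C -> B -> R :=
  fun a c b => Q a b c.

Lemma isDist_swap (A B C : finType) (Q : A -> B -> C -> R) : isDist Q -> isDist (swapYZ Q).
Proof.
move=> [Q0 Q1]; split=> [a c b|]; first exact: Q0.
by rewrite -Q1; apply: rsum_ext => a; rewrite rsum_swap.
Qed.

Lemma DeltaP_swap (A B C : finType) (P Q : A -> B -> C -> R) :
  DeltaP P Q -> DeltaP (swapYZ P) (swapYZ Q).
Proof. by move=> [Qd [QXY QXZ]]; split; [apply: isDist_swap | split]. Qed.

Lemma MI_XY_Z_swap (A B C : finType) (Q : A -> B -> C -> R) :
  MI_XY_Z (swapYZ Q) = MI_XZ_Y Q.
Proof. by apply: rsum_ext => a; rewrite rsum_swap. Qed.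

Lemma UIZ_swap (A B C : finType) (P : A -> B -> C -> R) : UIZ P = UIY (swapYZ P).
Proof.
rewrite /UIZ /UIY; congr Rinf; apply: functional_extensionality => r.
apply: propositional_extensionality; split => -[Q [DQ ->]]; exists (swapYZ Q).
  by rewrite MI_XY_Z_swap; split; first exact: DeltaP_swap.
by rewrite MI_XY_Z_swap; split; first exact: (DeltaP_swap DQ).
Qed.

Lemma UIZ_prod (X1 Y1 Z1 X2 Y2 Z2 : finType)
  (P1 : X1 -> Y1 -> Z1 -> R) (P2 : X2 -> Y2 -> Z2 -> R) :
  isDist P1 -> isDist P2 -> UIZ (prodDist P1 P2) = UIZ P1 + UIZ P2.
Proof.
by move=> P1d P2d; rewrite !UIZ_swap; apply: UIY_prod; apply: isDist_swap.
Qed.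

Lemma CI_prod (X1 Y1 Z1 X2 Y2 Z2 : finType)
  (P1 : X1 -> Y1 -> Z1 -> R) (P2 : X2 -> Y2 -> Z2 -> R) :
  isDist P1 -> isDist P2 -> CI (prodDist P1 P2) = CI P1 + CI P2.
Proof.
move=> P1d P2d.
have split_MI (X1' Y1' Z1' X2' Y2' Z2' : finType)
    (Q : (X1' * X2')%type -> (Y1' * Y2')%type -> (Z1' * Z2')%type -> R) :
    (forall x y z, 0 <= Q x y z) -> factorsXY Q -> factorsXZ Q ->
    MI_X_YZ Q = MI_X_YZ (marg1 Q) + MI_X_YZ (marg2 Q) + condDiv Q.
  by move=> Q0 fXY _; apply: MI_X_YZ_split.
have := Rinf_eq (Rinf_F_prod MI_X_YZ_bounded split_MI P1d P2d).
rewrite /valuesOn => inf_split.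
by rewrite /CI (F_prod (F := @MI_X_YZ) split_MI P1d P2d) inf_split; ring.
Qed.

Definition MI2 (A B : finType) (M : A -> B -> R) : R :=
  rsum (fun a => rsum (fun b => plog (M a b) (M a b)
     (rsum (fun b' => M a b') * rsum (fun a' => M a' b)))).

Lemma plog_mul a b r1 r2 c1 c2 : 0 <= a -> 0 <= b ->
  (0 < a -> 0 < r1 /\ 0 < c1) -> (0 < b -> 0 < r2 /\ 0 < c2) ->
  plog (a * b) (a * b) ((r1 * r2) * (c1 * c2)) =
  b * plog a a (r1 * c1) + a * plog b b (r2 * c2).
Proof.
move=> a0 b0 pos1 pos2.
case: (Req_EM_T a 0) => [->|an0]; first by rewrite Rmult_0_l !plog0; ring.
case: (Req_EM_T b 0) => [->|bn0]; first by rewrite Rmult_0_r !plog0; ring.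
have [r10 c10] : 0 < r1 /\ 0 < c1 by apply: pos1; lra.
have [r20 c20] : 0 < r2 /\ 0 < c2 by apply: pos2; lra.
rewrite !plogE //; last exact: Rmult_integral_contrapositive.
rewrite !ln_div; try by repeat apply: Rmult_lt_0_compat; lra.
by rewrite !ln_mult //; try (by repeat apply: Rmult_lt_0_compat; lra); rewrite /Rdiv; ring.
Qed.

Lemma MI2_prod (A1 B1 A2 B2 : finType) (M1 : A1 -> B1 -> R) (M2 : A2 -> B2 -> R) :
  (forall a b, 0 <= M1 a b) -> (forall a b, 0 <= M2 a b) ->
  rsum (fun a => rsum (fun b => M1 a b)) = 1 -> rsum (fun a => rsum (fun b => M2 a b)) = 1 ->
  MI2 (fun a b => M1 a.1 b.1 * M2 a.2 b.2) = MI2 M1 + MI2 M2.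
Proof.
move=> M10 M20 M11 M21.
have pos (A B : finType) (M : A -> B -> R) a b : (forall a b, 0 <= M a b) -> 0 < M a b ->
    0 < rsum (fun b' => M a b') /\ 0 < rsum (fun a' => M a' b).
  move=> M0 m0.
  have : M a b <= rsum (fun b' => M a b') := rsum_ge_term b (M0 a).
  have : M a b <= rsum (fun a' => M a' b) := rsum_ge_term a (fun a' => M0 a' b).
  lra.
rewrite /MI2.
under rsum_ext => a do under rsum_ext => b do
  rewrite (rsum_pair_prod (fun b1 => M1 a.1 b1) (fun b2 => M2 a.2 b2))
          (rsum_pair_prod (fun a1 => M1 a1 b.1) (fun a2 => M2 a2 b.2))
          (plog_mul (M10 a.1 b.1) (M20 a.2 b.2) (pos _ _ _ _ _ M10) (pos _ _ _ _ _ M20)).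
under rsum_ext => a do rewrite rsum_add.
have split2 (h : A1 * A2 -> B1 * B2 -> R) : rsum (fun a => rsum (fun b => h a b)) =
    rsum (fun a1 => rsum (fun b1 => rsum (fun a2 => rsum (fun b2 => h (a1, a2) (b1, b2))))).
  rewrite rsum_pair; apply: rsum_ext => a1.
  by under rsum_ext => a2 do rewrite rsum_pair; rewrite rsum_swap.
rewrite rsum_add !split2 /=; congr (_ + _).
- apply: rsum_ext => a1; apply: rsum_ext => b1.
  under rsum_ext => a2 do rewrite rsum_scalr.
  by rewrite rsum_scalr M21 Rmult_1_l.
- under rsum_ext => a1 do under rsum_ext => b1 do under rsum_ext => a2 do rewrite rsum_scal.
  under rsum_ext => a1 do under rsum_ext => b1 do rewrite rsum_scal.
  under rsum_ext => a1 do rewrite rsum_scalr.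
  by rewrite rsum_scalr M11 Rmult_1_l.
Qed.

(* MI_Q(X:Y) only depends on the (X,Y)-marginal, which is fixed on Delta_P. *)
Lemma MI_XY_DeltaP (A B C : finType) (P Q : A -> B -> C -> R) :
  DeltaP P Q -> MI_XY Q = MI_XY P.
Proof.
move=> [_ [QXY _]]; change (MI2 (margXY Q) = MI2 (margXY P)).
by have -> : margXY Q = margXY P by do 2 (apply: functional_extensionality => ?); apply: QXY.
Qed.

Lemma MI_XY_prod (X1 Y1 Z1 X2 Y2 Z2 : finType)
  (P1 : X1 -> Y1 -> Z1 -> R) (P2 : X2 -> Y2 -> Z2 -> R) :
  isDist P1 -> isDist P2 -> MI_XY (prodDist P1 P2) = MI_XY P1 + MI_XY P2.
Proof.
move=> P1d P2d; change (MI2 (margXY (prodDist P1 P2)) = MI2 (margXY P1) + MI2 (margXY P2)).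
have -> : margXY (prodDist P1 P2) = fun x y => margXY P1 x.1 y.1 * margXY P2 x.2 y.2.
  by do 2 (apply: functional_extensionality => ?); apply: prod_margXY.
by apply: MI2_prod; [apply: margXY_ge0; case: P1d | apply: margXY_ge0; case: P2d
                    | exact: S3_dist P1d | exact: S3_dist P2d].
Qed.

(* Since MI_Q(X:Y) is constant on Delta_P, SI(X:Y;Z) = MI(X:Y) - UI(X:Y\Z). *)
Lemma SI_UIY (A B C : finType) (P : A -> B -> C -> R) : isDist P -> SI P = MI_XY P - UIY P.
Proof.
move=> Pd; have [b MIb] := MI_XY_Z_bounded A B C.
have [UI_lb UI_glb] : IsInf (valuesOn (@MI_XY_Z) P) (UIY P).
  apply: Rinf_spec; first exact: valuesOn_ne.
  by exists b => r [Q [[Qd _] ->]]; apply: MIb.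
apply: Rsup_eq; split => [r [Q [DQ ->]] | s s_ub].
  by rewrite /CoI (MI_XY_DeltaP DQ); have := UI_lb _ (ex_intro _ Q (conj DQ erefl)); lra.
suff : MI_XY P - s <= UIY P by lra.
apply: UI_glb => r [Q [DQ ->]].
by have := s_ub _ (ex_intro _ Q (conj DQ erefl)); rewrite /CoI (MI_XY_DeltaP DQ); lra.
Qed.

Lemma SI_prod (X1 Y1 Z1 X2 Y2 Z2 : finType)
  (P1 : X1 -> Y1 -> Z1 -> R) (P2 : X2 -> Y2 -> Z2 -> R) :
  isDist P1 -> isDist P2 -> SI (prodDist P1 P2) = SI P1 + SI P2.
Proof.
move=> P1d P2d; rewrite !SI_UIY ?MI_XY_prod ?UIY_prod //; [ring | exact: isDist_prod].
Qed.

Theorem mainTheorem14 (X1 Y1 Z1 X2 Y2 Z2 : finType)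
  (P1 : X1 -> Y1 -> Z1 -> R) (P2 : X2 -> Y2 -> Z2 -> R)
  (hP1 : isDist P1) (hP2 : isDist P2) :
  let P := prodDist P1 P2 in
  SI P = SI P1 + SI P2 /\
  CI P = CI P1 + CI P2 /\
  UIY P = UIY P1 + UIY P2 /\
  UIZ P = UIZ P1 + UIZ P2.
Proof.
split; first exact: SI_prod.
split; first exact: CI_prod.
by split; [apply: UIY_prod | apply: UIZ_prod].
Qed.
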